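(* For every $n\in\mathbb N$, the $\Bbbk\mathbf{FA}$-module $\overline P^{\otimes n}$ has finite length. Consequently every indecomposable projective object of $\mathcal F(\mathbf{FA})$ has finite length.
   Context: Let $\Bbbk$ be a field. $\mathbf{FA}$ denotes the category of finite sets and all maps, and $\mathbf{FI}$, $\mathbf{FS}$, $\mathbf{FB}$ its wide subcategories of injections, surjections and bijections respectively; $\mathbf n=\{1,\dots,n\}$ for $n\in\mathbb N$ ($\mathbf 0=\emptyset$), and $\mathfrak S_n$ is the symmetric group. For a category $\mathcal C$, $\Bbbk\mathcal C(X,Y)$ is the $\Bbbk$-vector space with basis $\mathcal C(X,Y)$. A $\Bbbk\mathbf{FA}$-module is a functor from $\mathbf{FA}$ to $\Bbbk$-vector spaces (these form the abelian category $\mathcal F(\mathbf{FA})$); $\otimes$ denotes the pointwise tensor product over $\Bbbk$, and $\hom_{\Bbbk\mathbf{FA}}$ denotes natural transformations. $P^{\mathbf{FA}}_{\mathbf n}:=\Bbbk\mathbf{FA}(\mathbf n,-)$, so $P^{\mathbf{FA}}_{\mathbf n}(X)\cong\Bbbk[X]^{\otimes n}$ (where $\Bbbk[X]$ has basis $\{[x]:x\in X\}$), with the right $\mathfrak S_n$-action by precomposition, equivalently place permutation of tensor factors; write $P^{\mathbf{FA}}:=P^{\mathbf{FA}}_{\mathbf 1}$. Let $\overline{\Bbbk}$ be the functor with value $\Bbbk$ on non-empty sets (all maps acting by the identity) and $0$ on $\emptyset$, and $\Bbbk_{\mathbf 0}$ the functor with value $\Bbbk$ on $\emptyset$ and $0$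 on non-empty sets. $\overline P$ is the kernel of the surjection $P^{\mathbf{FA}}\to\overline\Bbbk$, $[x]\mapsto 1$; thus $\overline P(X)=\{\sum_x a_x[x]:\sum_x a_x=0\}$. For $n\ge1$, $\overline P^{\otimes n}$ is the $n$-fold pointwise tensor power, a subfunctor of $P^{\mathbf{FA}}_{\mathbf n}$ stable under the place-permutation right action of $\mathfrak S_n$; by convention $\overline P^{\otimes 0}:=\overline\Bbbk$. *)

From HB Require Import structures.
From mathcomp Require Import all_boot all_algebra.
Set Implicit Arguments. Unset Strict Implicit. Unset Printing Implicit Defensive.
Import GRing.Theory.
Local Open Scope ring_scope.

(* Skeleton of FA: the finite set n = {0,..,n-1} is 'I_n; maps are finite
   functions (so that equality of maps is extensional). *)
Definition fmap (m m' : nat) := {ffun 'I_m -> 'I_m'}.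
Definition fid m : fmap m m := [ffun i => i].
Definition fcomp m1 m2 m3 (g : fmap m2 m3) (f : fmap m1 m2) : fmap m1 m3 :=
  [ffun i => g (f i)].

(* A kFA-module: a functor from (the skeleton of) FA to k-vector spaces. *)
Record FAmod (k : fieldType) := FAMod {
  fa_obj : nat -> lmodType k;
  fa_act : forall m m', fmap m m' -> fa_obj m -> fa_obj m';
  fa_act_lin : forall m m' (f : fmap m m') (a : k) (x y : fa_obj m),
      fa_act f (a *: x + y) = a *: fa_act f x + fa_act f y;
  fa_act_id : forall m (x : fa_obj m), fa_act (fid m) x = x;
  fa_act_comp : forall m1 m2 m3 (f : fmap m1 m2) (g : fmap m2 m3) (x : fa_obj m1),
      fa_act (fcomp g f) x = fa_act g (fa_act f x)
}.

Section Sub.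
Variable k : fieldType.
Variable M : FAmod k.

Definition subfam := forall m, fa_obj M m -> Prop.

Definition is_subfunctor (S : subfam) : Prop :=
  [/\ forall m, S m 0,
      forall m (a : k) (x y : fa_obj M m), S m x -> S m y -> S m (a *: x + y)
    & forall m m' (f : fmap m m') (x : fa_obj M m), S m x -> S m' (@fa_act _ M _ _ f x)].

Definition sub_le (S T : subfam) := forall m x, S m x -> T m x.
Definition sub_lt (S T : subfam) := sub_le S T /\ exists m x, T m x /\ ~ S m x.
Definition full_sub : subfam := fun _ _ => True.

Definition finite_length_sub (S : subfam) : Prop :=
  exists (r : nat) (C : nat -> subfam),
    [/\ forall i, (i <= r)%N -> is_subfunctor (C i),
        forall m x, C 0%N m x <-> x = 0,
        forall m x, C r m x <-> S m x,
        forall i, (i < r)%N -> sub_lt (C i) (C i.+1)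
      & forall i, (i < r)%N -> forall T, is_subfunctor T ->
          ~ (sub_lt (C i) T /\ sub_lt T (C i.+1))].

Definition finite_length : Prop := finite_length_sub full_sub.

Definition indecomposable : Prop :=
  (exists m (x : fa_obj M m), x <> 0) /\
  forall S T : subfam, is_subfunctor S -> is_subfunctor T ->
    (forall m (x : fa_obj M m), exists y z, [/\ S m y, T m z & x = y + z]) ->
    (forall m x, S m x -> T m x -> x = 0) ->
    (forall m x, S m x -> x = 0) \/ (forall m x, T m x -> x = 0).
End Sub.

Definition is_nat_trans (k : fieldType) (M N : FAmod k)
    (phi : forall m, fa_obj M m -> fa_obj N m) : Prop :=
  (forall m (a : k) (x y : fa_obj M m), phi m (a *: x + y) = a *: phi m x + phi m y) /\
  (forall m m' (f : fmap m m') (x : fa_obj M m),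
      phi m' (@fa_act _ M _ _ f x) = @fa_act _ N _ _ f (phi m x)).

(* projective object: lifting along epimorphisms (= pointwise surjective
   natural transformations in the functor category) *)
Definition projective (k : fieldType) (P : FAmod k) : Prop :=
  forall (M N : FAmod k) (pi : forall m, fa_obj M m -> fa_obj N m),
    is_nat_trans pi -> (forall m (y : fa_obj N m), exists x, pi m x = y) ->
  forall g : forall m, fa_obj P m -> fa_obj N m, is_nat_trans g ->
    exists h : forall m, fa_obj P m -> fa_obj M m,
      is_nat_trans h /\ forall m x, pi m (h m x) = g m x.

(* The projective P^FA_n = k FA(n, -): P_n(m) has basis the maps n -> m. *)
Definition Pvec (k : fieldType) (n m : nat) := {ffun fmap n m -> k^o}.

Definition Pact (k : fieldType) n m m' (f : fmap m m') (v : Pvec k n m) : Pvec k n m' :=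
  [ffun g => \sum_(h : fmap n m | fcomp f h == g) v h].

Lemma Pact_lin (k : fieldType) n m m' (f : fmap m m') (a : k) (x y : Pvec k n m) :
  Pact f (a *: x + y) = a *: Pact f x + Pact f y.
Proof.
apply/ffunP => g; rewrite !ffunE /= scaler_sumr -big_split.
by apply: eq_bigr => h _; rewrite !ffunE.
Qed.

Lemma fcomp_id m1 m2 (h : fmap m1 m2) : fcomp (fid m2) h = h.
Proof. by apply/ffunP => i; rewrite !ffunE. Qed.

Lemma fcompA m1 m2 m3 m4 (h : fmap m1 m2) (f : fmap m2 m3) (g : fmap m3 m4) :
  fcomp (fcomp g f) h = fcomp g (fcomp f h).
Proof. by apply/ffunP => i; rewrite !ffunE. Qed.

Lemma Pact_id (k : fieldType) n m (x : Pvec k n m) : Pact (fid m) x = x.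
Proof.
apply/ffunP => g; rewrite ffunE.
under eq_bigl => h do rewrite fcomp_id.
by rewrite big_pred1_eq.
Qed.

Lemma Pact_comp (k : fieldType) n m1 m2 m3 (f : fmap m1 m2) (g : fmap m2 m3) (x : Pvec k n m1) :
  Pact (fcomp g f) x = Pact g (Pact f x).
Proof.
apply/ffunP => y; rewrite !ffunE.
under [RHS]eq_bigr => z _ do rewrite ffunE.
rewrite (partition_big (fun h => fcomp f h) (fun z => fcomp g z == y)) /=;
  last by move=> h; rewrite fcompA.
apply: eq_bigr => z /eqP Hz; apply: eq_bigl => h.
rewrite fcompA; case: (eqVneq (fcomp f h) z) => [->|]; by rewrite ?Hz ?eqxx ?andbT ?andbF.
Qed.

Definition Pmod (k : fieldType) (n : nat) : FAmod k :=
  @FAMod k (fun m => (Pvec k n m : lmodType k)) (@Pact k n)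
    (@Pact_lin k n) (@Pact_id k n) (@Pact_comp k n).

(* pure tensor a_1 (x) ... (x) a_n in k[m]^{(x) n} = P_n(m) *)
Definition ptensor (k : fieldType) n m (a : 'I_n -> {ffun 'I_m -> k}) : Pvec k n m :=
  [ffun h : fmap n m => \prod_(i < n) a i (h i)].

(* Pbar^{(x) n}(m) as a subspace of P_n(m) = k[m]^{(x) n}: the span of the
   pure tensors of elements of Pbar(m) = {sum_x a_x [x] : sum_x a_x = 0};
   for n = 0, the convention Pbar^{(x)0} := kbar (k on nonempty sets, 0 on
   the empty set), viewed inside P_0 (the constant functor k). *)
Definition Pbar_tensor (k : fieldType) (n : nat) : subfam (Pmod k n) :=
  fun m (v : Pvec k n m) =>
    if n is 0 then (0 < m)%N \/ v = 0
    else exists (r : nat) (c : 'I_r -> k) (a : 'I_r -> 'I_n -> {ffun 'I_m -> k}),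
      (forall j i, \sum_(x < m) a j i x = 0) /\
      v = \sum_(j < r) c j *: ptensor (a j).
Arguments Pbar_tensor : clear implicits.

From HB Require Import structures.
From mathcomp Require Import all_boot all_algebra finmap monalg zify.
From Stdlib Require Import Classical ClassicalEpsilon.
Set Implicit Arguments. Unset Strict Implicit. Unset Printing Implicit Defensive.
Import GRing.Theory.
Local Open Scope ring_scope.

(* Suppose M is generated by finitely many elements living on sets of at most N
   points. On a set of m > N + 1 points, the product of the operators
   1 - merge p q (q <> p) kills every generated element, while x minus this
   product applied to x only involves maps that factor through m - 1 points. So
   a subfunctor of M is determined by its values on sets of at most N + 1
   points, and the total dimension of these finitely many values is a bounded
   strictly monotone measure: every subfunctor of M has finite length. P_n is
   generated by [id_n], which gives the claim for Pbar^(x)n.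
   An indecomposable projective M is a retract of its free cover. Truncating a
   section to the finitely many basis vectors occurring in the image of some
   x0 <> 0 yields an endomorphism of M that fixes x0 and has finitely generated
   image; by Fitting's lemma M itself is finitely generated. *)

Section Subfunctors.
Variables (k : fieldType) (M : FAmod k).

Section ActLinear.
Variables (m m' : nat) (f : fmap m m').

Lemma fa_act_is_linear : linear (@fa_act k M m m' f).
Proof. by move=> a x y; rewrite fa_act_lin. Qed.

HB.instance Definition _ :=
  GRing.isLinear.Build k (fa_obj M m) (fa_obj M m') *:%R (@fa_act k M m m' f)
    fa_act_is_linear.

Local Notation act := (@fa_act k M m m' f).

Lemma fa_act0 : act 0 = 0. Proof. exact: linear0. Qed.
Lemma fa_actZ a x : act (a *: x) = a *: act x. Proof. exact: linearZ. Qed.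
Lemma fa_actB x y : act (x - y) = act x - act y. Proof. exact: linearB. Qed.
Lemma fa_act_sum (I : Type) (r : seq I) (P : pred I) (F : I -> fa_obj M m) :
  act (\sum_(i <- r | P i) F i) = \sum_(i <- r | P i) act (F i).
Proof. exact: linear_sum. Qed.

End ActLinear.

Lemma sub_le_trans (S T U : subfam M) : sub_le S T -> sub_le T U -> sub_le S U.
Proof. by move=> ST TU m x /ST /TU. Qed.

Lemma sub_lt_of_not_le (S T : subfam M) : sub_le S T -> ~ sub_le T S -> sub_lt S T.
Proof.
move=> ST nTS; split=> //; apply: NNPP => nex; apply: nTS => m x Tx.
by apply: NNPP => nSx; apply: nex; exists m, x.
Qed.

Lemma zero_subfunctor : is_subfunctor (fun m (x : fa_obj M m) => x = 0).
Proof. by split=> [//|m a x y -> ->|m m' f x ->]; rewrite ?scaler0 ?addr0 ?fa_act0. Qed.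

Lemma full_subfunctor : is_subfunctor (@full_sub _ M).
Proof. by []. Qed.

Lemma subfunctorI (S T : subfam M) : is_subfunctor S -> is_subfunctor T ->
  is_subfunctor (fun m x => S m x /\ T m x).
Proof.
case=> S0 SL Sact [T0 TL Tact].
by split=> [m|m a x y [Sx Tx] [Sy Ty]|m m' f x [Sx Tx]]; split; auto.
Qed.

Variable S : subfam M.
Arguments S : clear implicits.
Hypothesis HS : is_subfunctor S.

Lemma subfunctor0 m : S m 0.
Proof. by case: HS. Qed.

Lemma subfunctorZD m a x y : S m x -> S m y -> S m (a *: x + y).
Proof. by case: HS => _ SL _; apply: SL. Qed.

Lemma subfunctorD m x y : S m x -> S m y -> S m (x + y).
Proof. by move=> Sx Sy; rewrite -[x]scale1r; apply: subfunctorZD. Qed.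

Lemma subfunctorZ m a x : S m x -> S m (a *: x).
Proof. by move=> Sx; rewrite -[_ *: _]addr0; apply: subfunctorZD Sx (subfunctor0 m). Qed.

Lemma subfunctorB m x y : S m x -> S m y -> S m (x - y).
Proof. by move=> Sx Sy; rewrite -scaleN1r addrC; apply: subfunctorZD. Qed.

Lemma subfunctor_act m m' (f : fmap m m') x : S m x -> S m' (fa_act f x).
Proof. by case: HS => _ _; apply. Qed.

Lemma subfunctor_sum m (I : Type) (r : seq I) (P : pred I) (F : I -> fa_obj M m) :
  (forall i, P i -> S m (F i)) -> S m (\sum_(i <- r | P i) F i).
Proof.
move=> SF; elim/big_rec: _ => [|i x Pi Sx]; first exact: subfunctor0.
by apply: subfunctorD => //; apply: SF.
Qed.

End Subfunctors.

Section LengthFromMeasure.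
Variables (k : fieldType) (M : FAmod k) (S : subfam M).
Arguments S : clear implicits.
Variables (D : subfam M -> nat) (B : nat).
Hypothesis HS : is_subfunctor S.
Hypothesis D_le : forall T, is_subfunctor T -> sub_le T S -> (D T <= B)%N.
Hypothesis D_lt : forall T T', is_subfunctor T -> is_subfunctor T' -> sub_le T' S ->
  sub_lt T T' -> (D T < D T')%N.

Definition strict_chain r (C : nat -> subfam M) :=
  [/\ forall i, (i <= r)%N -> is_subfunctor (C i),
      forall i, (i <= r)%N -> sub_le (C i) S,
      forall m x, C 0%N m x <-> x = 0,
      forall m x, C r m x <-> S m x
    & forall i, (i < r)%N -> sub_lt (C i) (C i.+1)].

Lemma strict_chain_len r C : strict_chain r C -> (r <= B)%N.
Proof.
case=> Csub CS _ _ Clt.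
have D_ge i : (i <= r)%N -> (i <= D (C i))%N.
  elim: i => [//|i IH] Hi.
  have := D_lt (Csub i (ltnW Hi)) (Csub _ Hi) (CS _ Hi) (Clt _ Hi).
  have := IH (ltnW Hi); lia.
exact: leq_trans (D_ge r (leqnn r)) (D_le (Csub r (leqnn r)) (CS r (leqnn r))).
Qed.

Lemma strict_chain_insert r C i T : strict_chain r C -> (i < r)%N -> is_subfunctor T ->
  sub_lt (C i) T -> sub_lt T (C i.+1) ->
  strict_chain r.+1 (fun j => if (j <= i)%N then C j else if j == i.+1 then T else C j.-1).
Proof.
case=> Csub CS C0 Cr Clt ir HT [CiT nCiT] [TCi nTCi]; split.
- move=> j Hj; case: ifP => Hji; first by apply: Csub; lia.
  by case: ifP => // /eqP Hj1; apply: Csub; lia.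
- move=> j Hj; case: ifP => Hji; first by apply: CS; lia.
  case: ifP => [_|/eqP Hj1]; last by apply: CS; lia.
  exact: sub_le_trans TCi (CS _ ir).
- by move=> m x; rewrite leq0n; apply: C0.
- move=> m x; have -> : (r.+1 <= i)%N = false by lia.
  by have -> : (r.+1 == i.+1) = false by apply/eqP; lia.
- move=> j Hj; case: (ltngtP j i) => Hji.
  + by apply: Clt; lia.
  + case: ifP => [/eqP Hj1|/eqP Hj1].
      by subst j; rewrite (_ : i.+2 == i.+1 = false) //; apply/eqP; lia.
    rewrite (_ : j.+1 == i.+1 = false); last by apply/eqP; lia.
    by rewrite (_ : j.+1.-1 = j.-1.+1); [apply: Clt|]; lia.
  + by subst j; rewrite eqxx.
Qed.

Lemma finite_length_of_strict_chain r C : strict_chain r C -> finite_length_sub S.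
Proof.
have [d] := ubnP (B.+1 - r); elim: d r C => [//|d IH] r C Hd Hc.
case: (classic (exists i T, [/\ (i < r)%N, is_subfunctor T,
                              sub_lt (C i) T & sub_lt T (C i.+1)])).
  case=> i [T [ir HT CiT TCi]]; have Hc' := strict_chain_insert Hc ir HT CiT TCi.
  by apply: (IH _ _ _ Hc'); have := strict_chain_len Hc'; lia.
move=> maximal; exists r, C; case: Hc => Csub _ C0 Cr Clt.
by split=> // i ir T HT [CiT TCi]; apply: maximal; exists i, T.
Qed.

Lemma strict_chain_exists : exists r C, strict_chain r C.
Proof.
have zero_le_S : sub_le (fun m x => x = 0) S by move=> m x ->; apply: subfunctor0.
case: (classic (forall m x, S m x -> x = 0)) => [S0|Snz].
  exists 0%N, (fun _ m x => x = 0); split.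
  - by move=> _ _; apply: zero_subfunctor.
  - by move=> _ _; apply: zero_le_S.
  - by [].
  - by move=> m x; split=> [/zero_le_S|/S0].
  - by [].
exists 1%N, (fun i => if i is 0%N then fun m x => x = 0 else S); split.
- by case=> [_|]; [apply: zero_subfunctor|].
- by case=> [_|i _ m x]; [apply: zero_le_S|].
- by [].
- by [].
- case=> // _; split=> //; apply: NNPP => nex; apply: Snz => m x Sx.
  by apply: NNPP => nx; apply: nex; exists m, x.
Qed.

Theorem finite_length_of_measure : finite_length_sub S.
Proof. by have [r [C Hc]] := strict_chain_exists; apply: finite_length_of_strict_chain Hc. Qed.

Lemma measure_dcc (T : nat -> subfam M) :
  (forall s, is_subfunctor (T s)) -> (forall s, sub_le (T s) S) ->
  (forall s, sub_le (T s.+1) (T s)) -> exists t, sub_le (T t) (T t.+1).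
Proof.
move=> HT TS Tdec; apply: NNPP => stable_never.
have D_dec s : (s + D (T s) <= D (T 0%N))%N.
  elim: s => [//|s IH]; suff : (D (T s.+1) < D (T s))%N by lia.
  apply: D_lt (HT _) (HT _) (TS _) (sub_lt_of_not_le (Tdec s) _).
  by move=> Hle; apply: stable_never; exists s.
have := D_dec B.+1; have := D_le (HT 0%N) (TS 0%N); lia.
Qed.

Lemma measure_acc (T : nat -> subfam M) :
  (forall s, is_subfunctor (T s)) -> (forall s, sub_le (T s) S) ->
  (forall s, sub_le (T s) (T s.+1)) -> exists t, sub_le (T t.+1) (T t).
Proof.
move=> HT TS Tinc; apply: NNPP => stable_never.
have D_inc s : (s <= D (T s))%N.
  elim: s => [//|s IH]; suff : (D (T s) < D (T s.+1))%N by lia.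
  apply: D_lt (HT _) (HT _) (TS _) (sub_lt_of_not_le (Tinc s) _).
  by move=> Hle; apply: stable_never; exists s.
have := D_inc B.+1; have := D_le (HT B.+1) (TS B.+1); lia.
Qed.

End LengthFromMeasure.

Definition prop_bool (P : Prop) : bool :=
  if excluded_middle_informative P then true else false.

Lemma prop_boolP (P : Prop) : prop_bool P <-> P.
Proof. by rewrite /prop_bool; case: excluded_middle_informative. Qed.

Section MaxDim.
Variables (k : fieldType) (V : vectType k).
Implicit Types P Q : V -> Prop.

Definition maxdim P : nat :=
  \max_(d < (dim V).+1 | prop_bool (exists U : {vspace V},
                                      (forall u, u \in U -> P u) /\ \dim U = d)) d.

Lemma maxdim_le_dim P : (maxdim P <= dim V)%N.
Proof. by apply/bigmax_leqP => i _; rewrite -ltnS. Qed.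

Lemma dim_le_maxdim P (U : {vspace V}) : (forall u, u \in U -> P u) -> (\dim U <= maxdim P)%N.
Proof.
move=> UP; have dimU : (\dim U < (dim V).+1)%N by rewrite ltnS -dimvf dimvS ?subvf.
apply: (@leq_bigmax_cond _ _ (fun d : 'I_(dim V).+1 => nat_of_ord d) (Ordinal dimU)).
by apply/prop_boolP; exists U.
Qed.

Lemma maxdim_le P Q : (forall x, P x -> Q x) -> (maxdim P <= maxdim Q)%N.
Proof.
move=> PQ; apply/bigmax_leqP => i /prop_boolP [U [UP <-]].
by apply: dim_le_maxdim => u /UP /PQ.
Qed.

Lemma maxdim_witness P : P 0 ->
  exists U : {vspace V}, (forall u, u \in U -> P u) /\ \dim U = maxdim P.
Proof.
move=> P0; pose A := [pred d : 'I_(dim V).+1 | prop_bool (exists U : {vspace V},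
                                  (forall u, u \in U -> P u) /\ \dim U = d)].
have A_ne : (0 < #|A|)%N.
  apply/card_gt0P; exists ord0; rewrite inE; apply/prop_boolP.
  by exists 0%VS; rewrite dimv0; split=> // u; rewrite memv0 => /eqP ->.
have [d /prop_boolP [U [UP dimU]] dmax] :=
  eq_bigmax_cond (fun d : 'I_(dim V).+1 => nat_of_ord d) A_ne.
by exists U; rewrite /maxdim dimU -dmax.
Qed.

Lemma maxdim_lt P Q (y : V) : P 0 -> (forall x, P x -> Q x) ->
  (forall a u v, Q u -> Q v -> Q (a *: u + v)) -> Q y -> ~ P y -> (maxdim P < maxdim Q)%N.
Proof.
move=> P0 PQ Qlin Qy nPy; have [U [UP dimU]] := maxdim_witness P0.
have UyQ w : w \in (U + <[y]>)%VS -> Q w.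
  move=> /memv_addP [u Uu [v /vlineP [a ->] ->]].
  by rewrite addrC; apply: Qlin => //; apply/PQ/UP.
apply: leq_trans (dim_le_maxdim UyQ); rewrite -dimU.
have [dim_le dim_eq] := dimv_leqif_sup (addvSl U <[y]>).
rewrite ltn_neqAle dim_le andbT dim_eq; apply/negP => UyU.
by apply/nPy/UP/(subvP UyU)/(subvP (addvSr U _))/memv_line.
Qed.

End MaxDim.

Lemma fcomp_idr m1 m2 (h : fmap m1 m2) : fcomp h (fid m1) = h.
Proof. by apply/ffunP => i; rewrite !ffunE. Qed.

Definition merge m (p q : 'I_m) : fmap m m := [ffun i => if i == q then p else i].

Lemma merge_comm m (p q q' : 'I_m) :
  fcomp (merge p q) (merge p q') = fcomp (merge p q') (merge p q).
Proof.
apply/ffunP => i; rewrite !ffunE.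
have [iq'|iq'] := eqVneq i q'; have [iq|iq] := eqVneq i q; rewrite /= ?if_same //.
all: by rewrite ?iq' ?eqxx // (negbTE iq').
Qed.

Lemma merge_factor m (p q : 'I_m.+2) : q != p ->
  exists (g : fmap m.+2 m.+1) (l : fmap m.+1 m.+2), merge p q = fcomp l g.
Proof.
move=> qp; exists [ffun i => odflt ord0 (unlift q (merge p q i))], [ffun j => lift q j].
apply/ffunP => i.
have q_merge : q != merge p q i.
  by rewrite ffunE; have [//|iq] := eqVneq i q; rewrite eq_sym.
have [j mj umj] := unlift_some q_merge.
by rewrite [RHS]ffunE [in RHS]ffunE [in RHS]ffunE umj.
Qed.

Lemma codom_misses n m (p : 'I_m) (h : fmap n m) : (n.+1 < m)%N ->
  exists2 q, q != p & forall i, h i != q.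
Proof.
move=> nm; apply: NNPP => hit.
have sub_codom : predC1 p \subset codom h.
  apply/subsetP => q; rewrite inE => qp; apply: NNPP => nq; apply: hit; exists q => // i.
  by apply/eqP => hiq; apply: nq; rewrite -hiq codom_f.
have := subset_leq_card sub_codom; rewrite cardC1 card_ord.
have := card_size (codom h); rewrite size_codom card_ord => le_n le_c.
have := leq_trans le_c le_n; lia.
Qed.

Lemma ltn_sum (I : finType) (i0 : I) (f g : I -> nat) :
  (forall i, f i <= g i)%N -> (f i0 < g i0)%N -> (\sum_i f i < \sum_i g i)%N.
Proof.
move=> fg fg0; rewrite (bigD1 i0) //= [X in (_ < X)%N](bigD1 i0) //= -addSn.
by apply: leq_add => //; apply: leq_sum.
Qed.

Section Generated.
Variables (k : fieldType) (M : FAmod k) (gens : seq {m : nat & fa_obj M m}).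

Definition gen_by : subfam M := fun m x => forall P : fa_obj M m -> Prop,
  P 0 -> (forall a u v, P u -> P v -> P (a *: u + v)) ->
  (forall t, t \in gens -> forall h : fmap (tag t) m, P (fa_act h (tagged t))) -> P x.
Arguments gen_by : clear implicits.

Lemma gen_by_gen t m (h : fmap (tag t) m) : t \in gens -> gen_by m (fa_act h (tagged t)).
Proof. by move=> gt P _ _; apply. Qed.

Lemma gen_by_subfunctor : is_subfunctor gen_by.
Proof.
split.
- by move=> m P.
- move=> m a x y gx gy P P0 PL Pg.
  by apply: (PL); [exact: (gx P P0 PL Pg)|exact: (gy P P0 PL Pg)].
- move=> m m' f x gx; apply: (gx (fun z => gen_by m' (fa_act f z))).
  + by rewrite fa_act0 => P.
  + move=> a u v gu gv; rewrite fa_act_lin => P P0 PL Pg.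
    by apply: (PL); [exact: (gu P P0 PL Pg)|exact: (gv P P0 PL Pg)].
  + by move=> t gt h; rewrite -fa_act_comp; apply: gen_by_gen.
Qed.

Definition gen_degree : nat := \max_(t <- gens) tag t.

Lemma gen_degree_tag t : t \in gens -> (tag t <= gen_degree)%N.
Proof. by move=> gt; exact: (@leq_bigmax_seq _ gens xpredT (fun t => tag t) t gt). Qed.

Fixpoint purge m (p : 'I_m) (qs : seq 'I_m) (x : fa_obj M m) : fa_obj M m :=
  if qs is q :: qs' then purge p qs' x - fa_act (merge p q) (purge p qs' x) else x.

Lemma purge_is_linear m (p : 'I_m) qs : linear (purge p qs).
Proof. by move=> a x y; elim: qs => //= q qs' ->; rewrite fa_act_lin scalerBr opprD addrACA. Qed.

Lemma purge0 m (p : 'I_m) qs : purge p qs 0 = 0.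
Proof. by elim: qs => //= q qs' ->; rewrite fa_act0 subrr. Qed.

Lemma purge_merge_fixed m (p q : 'I_m) qs v :
  fa_act (merge p q) v = v -> fa_act (merge p q) (purge p qs v) = purge p qs v.
Proof.
move=> fix_v; elim: qs => [//|q' qs IH] /=.
by rewrite fa_actB -fa_act_comp merge_comm fa_act_comp IH.
Qed.

Lemma purge_eq0 m (p q : 'I_m) qs v :
  fa_act (merge p q) v = v -> q \in qs -> purge p qs v = 0.
Proof.
move=> fix_v; elim: qs => [//|q' qs IH] /=; rewrite inE => /orP [/eqP <-|qqs].
  by rewrite purge_merge_fixed // subrr.
by rewrite IH // fa_act0 subrr.
Qed.

(* A map from at most gen_degree points into m > gen_degree + 1 points misses
   some q != p, so merge p q fixes its image. *)
Lemma purge_gen_by m (p : 'I_m) x : (gen_degree.+1 < m)%N -> gen_by m x ->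
  purge p [seq q <- enum 'I_m | q != p] x = 0.
Proof.
move=> big_m gx; set qs := [seq q <- _ | _].
apply: (gx (fun z => purge p qs z = 0)) => [|a u v pu pv|t gt h].
- exact: purge0.
- by rewrite purge_is_linear pu pv scaler0 addr0.
have [q qp qh] : exists2 q, q != p & forall i, h i != q.
  by apply: codom_misses; have := gen_degree_tag gt; lia.
apply: (@purge_eq0 _ p q); last by rewrite /qs mem_filter qp mem_enum.
rewrite -fa_act_comp; congr fa_act; apply/ffunP => i.
by rewrite !ffunE (negbTE (qh i)).
Qed.

Lemma sub_purge m (p : 'I_m) qs (T T' : subfam M) x :
  is_subfunctor T -> is_subfunctor T' ->
  (forall q, q \in qs -> forall y, T' m y -> T m (fa_act (merge p q) y)) ->
  T' m x -> T m (x - purge p qs x).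
Proof.
move=> HT HT' Tmerge T'x; elim: qs Tmerge => [|q qs IH] Tmerge /=.
  by rewrite subrr; apply: subfunctor0.
have T_diff : T m (x - purge p qs x) by apply: IH => q' q'qs; apply: Tmerge; rewrite inE q'qs orbT.
set y := purge p qs x; pose A := @fa_act k M _ _ (merge p q).
have Ay : A x - A (x - y) = A y by rewrite /A fa_actB opprB addrC subrK.
rewrite opprB addrA addrAC -/A -Ay; apply: (subfunctorD HT T_diff).
apply: (subfunctorB HT); first exact: (Tmerge q (mem_head _ _) _ T'x).
exact: (subfunctor_act HT _ T_diff).
Qed.

(* On larger sets, x - purge x only involves merges, which factor through
   fewer points, and purge x = 0. *)
Lemma gen_by_sub_le T T' : is_subfunctor T -> is_subfunctor T' -> sub_le T' gen_by ->
  (forall m, (m < gen_degree.+2)%N -> forall x, T' m x -> T m x) -> sub_le T' T.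
Proof.
move=> HT HT' T'gen small; elim/ltn_ind => m IH x T'x.
have [/small|big_m] := ltnP m gen_degree.+2; first exact.
case: m IH x T'x big_m => [|[|m]] IH x T'x big_m; try lia.
have Tmerge q : q != ord0 -> forall y, T' m.+2 y -> T m.+2 (fa_act (merge ord0 q) y).
  move=> q0 y T'y; have [g [l ->]] := merge_factor q0.
  rewrite fa_act_comp; apply: (subfunctor_act HT); apply: IH => //.
  exact: (subfunctor_act HT').
have := sub_purge (p := ord0) (qs := [seq q <- enum 'I_m.+2 | q != ord0]) HT HT' _ T'x.
rewrite purge_gen_by ?subr0; [apply | lia | exact: T'gen].
by move=> q; rewrite mem_filter => /andP [q0 _]; apply: Tmerge.
Qed.

Definition gen_index m := {j : 'I_(size gens) & fmap (tag (tnth (in_tuple gens) j)) m}.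
Definition gen_coords m := {ffun gen_index m -> k^o}.
Definition gen_comb m (c : gen_coords m) : fa_obj M m :=
  \sum_(q : gen_index m) c q *: fa_act (tagged q) (tagged (tnth (in_tuple gens) (tag q))).

Lemma gen_comb_is_linear m : linear (@gen_comb m).
Proof.
move=> a c c'; rewrite /gen_comb scaler_sumr -big_split; apply: eq_bigr => q _.
by rewrite !ffunE scalerDl scalerA.
Qed.

Lemma gen_comb0 m : gen_comb (0 : gen_coords m) = 0.
Proof. by rewrite /gen_comb big1 // => q _; rewrite ffunE scale0r. Qed.

Lemma gen_by_comb m x : gen_by m x -> exists c : gen_coords m, x = gen_comb c.
Proof.
move=> gx; apply: (gx (fun z => exists c : gen_coords m, z = gen_comb c)).
- by exists 0; rewrite gen_comb0.
- by move=> a u v [c ->] [c' ->]; exists (a *: c + c'); rewrite gen_comb_is_linear.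
move=> t /(tnthP (in_tuple gens)) [j ->] h.
pose q0 : gen_index m := Tagged (fun j => fmap (tag (tnth (in_tuple gens) j)) m) h.
exists [ffun q => (q == q0)%:R]; rewrite /gen_comb (bigD1 q0) //= big1.
  by rewrite ffunE eqxx scale1r addr0.
by move=> q qq0; rewrite ffunE (negbTE qq0) scale0r.
Qed.

(* By gen_by_sub_le, sets of at most gen_degree + 1 points detect strict inclusions. *)
Definition gen_measure (T : subfam M) : nat :=
  \sum_(m < gen_degree.+2) maxdim (fun c : gen_coords m => T m (gen_comb c)).

Definition gen_measure_max : nat := \sum_(m < gen_degree.+2) dim (gen_coords m).

Lemma gen_measure_le T : (gen_measure T <= gen_measure_max)%N.
Proof. by apply: leq_sum => m _; apply: maxdim_le_dim. Qed.

Lemma gen_measure_lt T T' : is_subfunctor T -> is_subfunctor T' -> sub_le T' gen_by ->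
  sub_lt T T' -> (gen_measure T < gen_measure T')%N.
Proof.
move=> HT HT' T'gen [TT' [m0 [x0 [T'x0 nTx0]]]].
have [m [small_m [x [T'x nTx]]]] :
    exists m, (m < gen_degree.+2)%N /\ exists x, T' m x /\ ~ T m x.
  apply: NNPP => nex; apply/nTx0/(gen_by_sub_le HT HT' T'gen _ T'x0) => m small_m x T'x.
  by apply: NNPP => nTx; apply: nex; exists m; split=> //; exists x.
have [c xc] := gen_by_comb (T'gen _ _ T'x); subst x.
apply: (@ltn_sum _ (Ordinal small_m)
  (fun i : 'I_gen_degree.+2 => maxdim (fun c : gen_coords i => T i (gen_comb c)))
  (fun i => maxdim (fun c : gen_coords i => T' i (gen_comb c)))) => [i|/=].
  by apply: maxdim_le => c'; apply: TT'.
apply: (@maxdim_lt _ _ _ _ c) => //.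
- by rewrite gen_comb0; apply: subfunctor0.
- by move=> c'; apply: TT'.
- by move=> a u v T'u T'v; rewrite gen_comb_is_linear; apply: subfunctorZD.
Qed.

Theorem finite_length_gen_by S : is_subfunctor S -> sub_le S gen_by -> finite_length_sub S.
Proof.
move=> HS Sgen; apply: (finite_length_of_measure HS (D := gen_measure) (B := gen_measure_max)).
  by move=> T _ _; apply: gen_measure_le.
by move=> T T' HT HT' T'S; apply: gen_measure_lt => // m x /T'S /Sgen.
Qed.

Lemma gen_by_dcc (T : nat -> subfam M) :
  (forall s, is_subfunctor (T s)) -> (forall s, sub_le (T s) gen_by) ->
  (forall s, sub_le (T s.+1) (T s)) -> exists t, sub_le (T t) (T t.+1).
Proof.
apply: (measure_dcc (D := gen_measure) (B := gen_measure_max)) => [U _ _|]; first exact: gen_measure_le.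
exact: gen_measure_lt.
Qed.

Lemma gen_by_acc (T : nat -> subfam M) :
  (forall s, is_subfunctor (T s)) -> (forall s, sub_le (T s) gen_by) ->
  (forall s, sub_le (T s) (T s.+1)) -> exists t, sub_le (T t.+1) (T t).
Proof.
apply: (measure_acc (D := gen_measure) (B := gen_measure_max)) => [U _ _|]; first exact: gen_measure_le.
exact: gen_measure_lt.
Qed.

End Generated.

Arguments gen_by {k M} gens m x.

Section PbarTensor.
Variable k : fieldType.

Definition Pgen n : Pvec k n n := [ffun g => (g == fid n)%:R].

Lemma Pact_Pgen n m (h : fmap n m) : Pact h (Pgen n) = [ffun g => (g == h)%:R].
Proof.
apply/ffunP => g; rewrite !ffunE big_mkcond (bigD1 (fid n)) //= big1.
  by rewrite ffunE eqxx addr0 fcomp_idr eq_sym; case: (g == h).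
by move=> h' /negbTE h'id; rewrite ffunE h'id if_same.
Qed.

Definition Pgens n : seq {m : nat & fa_obj (Pmod k n) m} := [:: Tagged _ (Pgen n)].

Lemma gen_by_Pgen n m (v : Pvec k n m) : gen_by (Pgens n) m v.
Proof.
have -> : v = \sum_(h : fmap n m) v h *: Pact h (Pgen n).
  apply/ffunP => g; rewrite sum_ffunE (bigD1 g) //= big1 => [|h hg].
    by rewrite ffunE Pact_Pgen ffunE eqxx addr0; exact: (esym (mulr1 (v g))).
  by rewrite ffunE Pact_Pgen ffunE eq_sym (negbTE hg) scaler0.
apply: (subfunctor_sum (gen_by_subfunctor _)) => h _.
apply: (subfunctorZ (gen_by_subfunctor _)).
exact: (@gen_by_gen _ (Pmod k n) (Pgens n) (Tagged _ (Pgen n)) m h (mem_head _ _)).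
Qed.

Definition push m m' (f : fmap m m') (b : {ffun 'I_m -> k}) : {ffun 'I_m' -> k} :=
  [ffun y => \sum_(x | f x == y) b x].

Lemma push_sum0 m m' (f : fmap m m') (b : {ffun 'I_m -> k}) :
  \sum_x b x = 0 -> \sum_y push f b y = 0.
Proof.
move=> b0; rewrite -[RHS]b0 [RHS](partition_big f predT) //=.
by apply: eq_bigr => y _; rewrite ffunE.
Qed.

Lemma Pact_ptensor n m m' (f : fmap m m') (a : 'I_n -> {ffun 'I_m -> k}) :
  Pact f (ptensor a) = ptensor (fun i => push f (a i)).
Proof.
apply/ffunP => g; rewrite !ffunE.
under eq_bigr do rewrite ffunE.
under [RHS]eq_bigr do rewrite ffunE.
rewrite (bigA_distr_big_dep (fun i x => f x == g i) (fun i x => a i x)).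
apply: eq_bigl => h; apply/eqP/familyP => [<- i|fh].
  by rewrite unfold_in /= ffunE.
by apply/ffunP => i; rewrite ffunE; have := fh i; rewrite unfold_in /= => /eqP.
Qed.

Lemma Pbar_tensor_subfunctor n : is_subfunctor (Pbar_tensor k n).
Proof.
case: n => [|n].
  split=> [m|m a x y [m_gt0|->] [m'_gt0|->]|m m' f x [m_gt0|->]]; try by left.
  - by right.
  - by right; rewrite scaler0 addr0.
  - by left; have := ltn_ord (f (Ordinal m_gt0)); lia.
  - by right; apply: (@fa_act0 _ (Pmod k 0)).
split.
- by move=> m; exists 0%N, (fun _ => 0), (fun _ _ => 0); split; [case | rewrite big_ord0].
- move=> m a x y [r1 [c1 [a1 [sum_a1 ->]]]] [r2 [c2 [a2 [sum_a2 ->]]]].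
  exists (r1 + r2)%N,
    (fun j => match split j with inl j1 => a * c1 j1 | inr j2 => c2 j2 end),
    (fun j => match split j with inl j1 => a1 j1 | inr j2 => a2 j2 end); split.
    by move=> j i; case: (split j).
  rewrite big_split_ord /= scaler_sumr; congr (_ + _); apply: eq_bigr => j _.
    by rewrite (unsplitK (inl j) : split (lshift r2 j) = inl j) scalerA.
  by rewrite (unsplitK (inr j) : split (rshift r1 j) = inr j).
- move=> m m' f x [r [c [a [sum_a ->]]]]; exists r, c, (fun j i => push f (a j i)).
  split=> [j i|]; first exact: push_sum0.
  rewrite (@fa_act_sum _ (Pmod k n.+1)); apply: eq_bigr => j _.
  by rewrite (@fa_actZ _ (Pmod k n.+1)) /= Pact_ptensor.
Qed.

Theorem finite_length_Pbar_tensor n : finite_length_sub (Pbar_tensor k n).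
Proof.
apply: (finite_length_gen_by (Pbar_tensor_subfunctor n)) => m v _.
exact: gen_by_Pgen.
Qed.

End PbarTensor.

Section LinearExtension.
Variables (k : fieldType) (K : choiceType) (V : lmodType k).

Definition lin_ext (F : K -> V) (g : {malg k[K]}) : V := \sum_(x <- msupp g) g@_x *: F x.

Lemma lin_extEw F g (d : {fset K}) :
  (msupp g `<=` d)%fset -> lin_ext F g = \sum_(x <- d) g@_x *: F x.
Proof.
move=> gd; apply: big_fset_incl => // x _ xg.
by rewrite mcoeff_outdom // scale0r.
Qed.

Lemma lin_ext_is_linear F : linear (lin_ext F).
Proof.
move=> a g g'; pose d := (msupp g `|` msupp g')%fset.
have supp_ag : (msupp (a *: g + g') `<=` d)%fset.
  exact: fsubset_trans (msuppD_le _ _) (fsetSU _ (msuppZ_le _ _)).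
rewrite (lin_extEw F (fsubsetUl _ _ : (_ `<=` d)%fset)).
rewrite (lin_extEw F (fsubsetUr _ _ : (_ `<=` d)%fset)) (lin_extEw F supp_ag).
rewrite scaler_sumr -big_split; apply: eq_bigr => x _.
by rewrite mcoeffD mcoeffZ scalerDl scalerA.
Qed.

Lemma lin_ext0 F : lin_ext F 0 = 0.
Proof. by rewrite /lin_ext msupp0 big_nil. Qed.

Lemma eq_lin_ext F F' g : F =1 F' -> lin_ext F g = lin_ext F' g.
Proof. by move=> FF'; apply: eq_bigr => x _; rewrite FF'. Qed.

Lemma lin_extU F c x : lin_ext F << c *g x >> = c *: F x.
Proof. by rewrite (lin_extEw F msuppU_le) big_seq_fset1 mcoeffUU. Qed.

Lemma lin_ext_sum F (I : Type) (r : seq I) (c : I -> k) (G : I -> {malg k[K]}) :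
  lin_ext F (\sum_(i <- r) c i *: G i) = \sum_(i <- r) c i *: lin_ext F (G i).
Proof.
elim/big_rec2: _ => [|i y1 g _ <-]; first exact: lin_ext0.
by rewrite lin_ext_is_linear.
Qed.

End LinearExtension.

Lemma lin_ext_unit (k : fieldType) (K : choiceType) (g : {malg k[K]}) :
  lin_ext (fun x => << x >>) g = g.
Proof.
rewrite [RHS]monalgE; apply: eq_bigr => x _; apply/malgP => y.
by rewrite mcoeffZ !mcoeffU; case: (x == y); rewrite ?mulr1 ?mulr0.
Qed.

Lemma lin_ext_comp (k : fieldType) (K K' : choiceType) (V : lmodType k)
    (F : K -> {malg k[K']}) (G : K' -> V) g :
  lin_ext G (lin_ext F g) = lin_ext (fun x => lin_ext G (F x)) g.
Proof. exact: lin_ext_sum. Qed.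

Lemma fa_act_lin_ext (k : fieldType) (M : FAmod k) (K : choiceType) m m' (f : fmap m m')
    (F : K -> fa_obj M m) g :
  fa_act f (lin_ext F g) = lin_ext (fun x => fa_act f (F x)) g.
Proof. by rewrite fa_act_sum; apply: eq_bigr => x _; rewrite fa_actZ. Qed.

(* The free kFA-module on all elements of M: in degree m' its basis is the set
   of pairs (h, y) with y in M(m) and h : m -> m'. *)
Section FreeCover.
Variables (k : fieldType) (M : FAmod k).

Definition free_basis m' := {m : nat & (fmap m m' * fa_obj M m)%type}.
Definition free_space m' : lmodType k := {malg k[free_basis m']}.

Definition free_basis_map m m' (f : fmap m m') (q : free_basis m) : free_basis m' :=
  Tagged (fun m0 => (fmap m0 m' * fa_obj M m0)%type) (fcomp f (tagged q).1, (tagged q).2).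

Definition free_act m m' (f : fmap m m') (g : free_space m) : free_space m' :=
  lin_ext (fun q => << free_basis_map f q >>) g.

Lemma free_act_lin m m' (f : fmap m m') a g g' :
  free_act f (a *: g + g') = a *: free_act f g + free_act f g'.
Proof. exact: lin_ext_is_linear. Qed.

Lemma free_act_id m (g : free_space m) : free_act (fid m) g = g.
Proof.
rewrite /free_act -[RHS]lin_ext_unit; apply: eq_lin_ext => -[m0 [h y]].
by rewrite /free_basis_map /= fcomp_id.
Qed.

Lemma free_act_comp m1 m2 m3 (f : fmap m1 m2) (g : fmap m2 m3) (v : free_space m1) :
  free_act (fcomp g f) v = free_act g (free_act f v).
Proof.
rewrite /free_act lin_ext_comp; apply: eq_lin_ext => -[m0 [h y]].
by rewrite lin_extU scale1r /free_basis_map /= fcompA.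
Qed.

Definition free_FAmod : FAmod k :=
  @FAMod k free_space free_act free_act_lin free_act_id free_act_comp.

Definition free_eval m (g : free_space m) : fa_obj M m :=
  lin_ext (fun q => fa_act (tagged q).1 (tagged q).2) g.

Lemma free_eval_nat : is_nat_trans (M := free_FAmod) free_eval.
Proof.
split=> [m a g g'|m m' f g]; first exact: lin_ext_is_linear.
rewrite /= /free_eval /free_act lin_ext_comp fa_act_lin_ext.
apply: eq_lin_ext => -[m0 [h y]].
by rewrite lin_extU scale1r /free_basis_map /= fa_act_comp.
Qed.

Lemma free_eval_surj m (y : fa_obj M m) : exists g, free_eval g = y.
Proof.
exists << Tagged (fun m0 => (fmap m0 m * fa_obj M m0)%type) (fid m, y) >>.
by rewrite /free_eval lin_extU scale1r /= fa_act_id.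
Qed.

Definition basis_point m (q : free_basis m) : {m0 : nat & fa_obj M m0} :=
  Tagged (fun m0 => fa_obj M m0) (tagged q).2.

Definition free_trunc (A : seq {m : nat & fa_obj M m}) m (g : free_space m) : free_space m :=
  lin_ext (fun q => if basis_point q \in A then << q >> else 0) g.

Lemma free_trunc_nat A : is_nat_trans (M := free_FAmod) (N := free_FAmod) (free_trunc A).
Proof.
split=> [m a g g'|m m' f g]; first exact: lin_ext_is_linear.
rewrite /= /free_trunc /free_act !lin_ext_comp; apply: eq_lin_ext => q.
rewrite lin_extU scale1r (_ : basis_point (free_basis_map f q) = basis_point q) //.
by case: ifP; rewrite ?lin_extU ?scale1r ?lin_ext0.
Qed.

Lemma free_trunc_id A m (g : free_space m) :
  {subset [seq basis_point q | q <- msupp g] <= A} -> free_trunc A g = g.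
Proof.
move=> gA; rewrite /free_trunc -[RHS]lin_ext_unit; apply: eq_big_seq => q qg.
by rewrite gA // map_f.
Qed.

Lemma gen_by_free_eval_trunc A m (g : free_space m) :
  gen_by A m (free_eval (free_trunc A g)).
Proof.
rewrite /free_trunc /free_eval lin_ext_comp.
apply: (subfunctor_sum (gen_by_subfunctor A)) => q _.
apply: (subfunctorZ (gen_by_subfunctor A)); case: ifP => qA.
  by rewrite lin_extU scale1r; exact: (@gen_by_gen _ _ A (basis_point q) m (tagged q).1 qA).
by rewrite lin_ext0; apply: subfunctor0 (gen_by_subfunctor A) _.
Qed.

End FreeCover.

Lemma projective_free_section (k : fieldType) (M : FAmod k) : projective M ->
  exists sigma, is_nat_trans (N := free_FAmod M) sigma /\
                forall m x, free_eval (sigma m x) = x.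
Proof.
move=> HP; have id_nat : is_nat_trans (fun m (x : fa_obj M m) => x) by [].
exact: HP _ _ _ (free_eval_nat M) (fun m => @free_eval_surj _ M m) _ id_nat.
Qed.

Section NatTrans.
Variables (k : fieldType) (M N P : FAmod k).

Lemma is_nat_trans_comp (phi : forall m, fa_obj M m -> fa_obj N m)
    (psi : forall m, fa_obj N m -> fa_obj P m) :
  is_nat_trans phi -> is_nat_trans psi -> is_nat_trans (fun m x => psi m (phi m x)).
Proof.
case=> phi_lin phi_act [psi_lin psi_act].
by split=> [m a x y|m m' f x]; rewrite ?phi_lin ?psi_lin ?phi_act ?psi_act.
Qed.

Variable phi : forall m, fa_obj M m -> fa_obj N m.
Arguments phi : clear implicits.
Hypothesis phi_nat : is_nat_trans phi.

Lemma nat_trans0 m : phi m 0 = 0.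
Proof.
have := (proj1 phi_nat) m 1 0 0; rewrite !scale1r addr0.
by move=> /(congr1 (fun z => z - phi m 0)); rewrite subrr addrK.
Qed.

Lemma nat_transB m x y : phi m (x - y) = phi m x - phi m y.
Proof.
have := (proj1 phi_nat) m (-1) y x; rewrite !scaleN1r addrC => ->.
by rewrite addrC.
Qed.

Lemma nat_image_subfunctor : is_subfunctor (fun m y => exists x, y = phi m x).
Proof.
case: phi_nat => phi_lin phi_act.
split=> [m|m a _ _ [x ->] [y ->]|m m' f _ [x ->]].
- by exists 0; rewrite nat_trans0.
- by exists (a *: x + y); rewrite phi_lin.
- by exists (fa_act f x); rewrite phi_act.
Qed.

Lemma nat_kernel_subfunctor : is_subfunctor (fun m x => phi m x = 0).
Proof.
case: phi_nat => phi_lin phi_act.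
split=> [m|m a x y phix phiy|m m' f x phix]; first exact: nat_trans0.
  by rewrite phi_lin phix phiy scaler0 addr0.
by rewrite phi_act phix fa_act0.
Qed.

End NatTrans.

Lemma is_nat_trans_iter (k : fieldType) (M : FAmod k)
    (phi : forall m, fa_obj M m -> fa_obj M m) s :
  is_nat_trans phi -> is_nat_trans (fun m => iter s (phi m)).
Proof.
move=> phi_nat; elim: s => [|s IH]; first by [].
exact: (is_nat_trans_comp IH phi_nat).
Qed.

(* Fitting's lemma: the images of the iterates of phi decrease and their kernels
   inside gen_by increase, both chains stabilize, and then M is the direct sum of
   the image and the kernel of phi^r for r large. *)
Section Fitting.
Variables (k : fieldType) (M : FAmod k) (gens : seq {m : nat & fa_obj M m}).
Variable phi : forall m, fa_obj M m -> fa_obj M m.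
Arguments phi : clear implicits.
Hypothesis phi_nat : is_nat_trans phi.
Hypothesis phi_gen : forall m x, gen_by gens m (phi m x).

Definition iter_image s : subfam M := fun m x => exists y, x = iter s (phi m) y.
Definition iter_kernel s : subfam M := fun m x => gen_by gens m x /\ iter s (phi m) x = 0.
Arguments iter_image : clear implicits.
Arguments iter_kernel : clear implicits.

Lemma iter_image_subfunctor s : is_subfunctor (iter_image s).
Proof. exact: nat_image_subfunctor (is_nat_trans_iter s phi_nat). Qed.

Lemma iter_kernel_subfunctor s : is_subfunctor (iter_kernel s).
Proof.
exact: subfunctorI (gen_by_subfunctor gens)
                   (nat_kernel_subfunctor (is_nat_trans_iter s phi_nat)).
Qed.

Lemma gen_by_iter s m x : gen_by gens m x -> gen_by gens m (iter s (phi m) x).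
Proof. by case: s => // s _; apply: phi_gen. Qed.

Lemma iter_image_gen s : sub_le (iter_image s.+1) (gen_by gens).
Proof. by move=> m _ [y ->]; apply: phi_gen. Qed.

Lemma iter_kernel_gen s : sub_le (iter_kernel s) (gen_by gens).
Proof. by move=> m x []. Qed.

Lemma iter_image_le s s' : (s <= s')%N -> sub_le (iter_image s') (iter_image s).
Proof.
move=> ss' m _ [y ->]; exists (iter (s' - s) (phi m) y).
by rewrite -iterD subnKC.
Qed.

Lemma iter_kernel_le s : sub_le (iter_kernel s) (iter_kernel s.+1).
Proof. by move=> m x [gx phix]; split; rewrite // iterS phix nat_trans0. Qed.

Lemma iter_image_stable t s : sub_le (iter_image t) (iter_image t.+1) ->
  (t <= s)%N -> sub_le (iter_image t) (iter_image s).
Proof.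
move=> stable /subnKC <-; elim: (s - t)%N => [|u IH] m x; first by rewrite addn0.
move=> /IH [z ->]; have [w phitz] := stable m _ (ex_intro _ z erefl).
by exists w; rewrite -addSnnS addnC iterD phitz -iterD addnC.
Qed.

Lemma iter_kernel_stable t s : sub_le (iter_kernel t.+1) (iter_kernel t) ->
  (t <= s)%N -> sub_le (iter_kernel s) (iter_kernel t).
Proof.
move=> stable /subnKC <-; elim: (s - t)%N => [|u IH] m x [gx phix].
  by rewrite addn0 in phix.
apply: IH; split=> //.
have [_ phiux] : iter_kernel t m (iter u (phi m) x).
  by apply: stable; split; [apply: gen_by_iter | rewrite -iterD addSnnS].
by rewrite iterD.
Qed.

Lemma iter_fitting_sum r :
  sub_le (iter_image r) (iter_image (r + r)) ->
  forall m x, exists y z, [/\ iter_image r m y, iter r (phi m) z = 0 & x = y + z].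
Proof.
move=> stable m x; have [w phirx] := stable m _ (ex_intro _ x erefl).
exists (iter r (phi m) w), (x - iter r (phi m) w); split.
- by exists w.
- by rewrite (nat_transB (is_nat_trans_iter r phi_nat)) -iterD -phirx subrr.
- by rewrite addrC subrK.
Qed.

Lemma iter_fitting_cap t r :
  sub_le (iter_kernel t.+1) (iter_kernel t) -> (t < r)%N ->
  forall m y, iter_image r m y -> iter r (phi m) y = 0 -> y = 0.
Proof.
move=> stable tr m _ [w ->]; rewrite -iterD => phi2rw.
have [_ phitw] : iter_kernel t m (phi m w).
  have t_le : (t <= (r + r).-1)%N by lia.
  apply: (iter_kernel_stable stable t_le); split; first exact: phi_gen.
  by rewrite -iterSr prednK //; lia.
rewrite -(subnK tr) iterD iterSr phitw.
exact: nat_trans0 (is_nat_trans_iter _ phi_nat) _.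
Qed.

Variables (m0 : nat) (x0 : fa_obj M m0).
Hypotheses (phi_x0 : phi m0 x0 = x0) (x0_neq0 : x0 <> 0) (M_indec : indecomposable M).

Theorem indecomposable_gen_by m x : gen_by gens m x.
Proof.
have [t0 image_stable] := gen_by_dcc (T := fun s => iter_image s.+1)
  (fun s => iter_image_subfunctor _) iter_image_gen (fun s => iter_image_le (leqnSn s.+1)).
have [t1 kernel_stable] := gen_by_acc (T := iter_kernel)
  iter_kernel_subfunctor iter_kernel_gen iter_kernel_le.
pose r := (t0 + t1).+2.
have image_r_stable : sub_le (iter_image r) (iter_image (r + r)).
  have t0r : (t0.+1 <= r)%N by rewrite /r; lia.
  apply: sub_le_trans (iter_image_le t0r) (iter_image_stable image_stable _).
  by rewrite /r; lia.
case: M_indec => _ /(_ (iter_image r) (fun m x => iter r (phi m) x = 0)) [].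
- exact: iter_image_subfunctor.
- exact: nat_kernel_subfunctor (is_nat_trans_iter r phi_nat).
- exact: iter_fitting_sum.
- by apply: (iter_fitting_cap kernel_stable); rewrite /r; lia.
- by move=> image0; case: x0_neq0; apply: image0; exists x0; rewrite iter_fix.
have [y [z [[w ->] z0 ->]]] := iter_fitting_sum image_r_stable x.
by move=> /(_ _ _ z0) ->; rewrite addr0; apply: phi_gen.
Qed.

End Fitting.

Theorem finite_length_projective_indecomposable (k : fieldType) (M : FAmod k) :
  projective M -> indecomposable M -> finite_length M.
Proof.
move=> HP HI; have [[m0 [x0 x0_neq0]] _] := HI.
have [sigma [sigma_nat sigmaK]] := projective_free_section HP.
pose A := [seq basis_point q | q <- msupp (sigma m0 x0)].
pose phi m x := free_eval (free_trunc A (sigma m x)).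
have phi_nat : is_nat_trans phi.
  exact: is_nat_trans_comp (is_nat_trans_comp sigma_nat (free_trunc_nat A)) (free_eval_nat M).
have phi_gen m x : gen_by A m (phi m x) by apply: gen_by_free_eval_trunc.
have phi_x0 : phi m0 x0 = x0 by rewrite /phi free_trunc_id ?sigmaK.
apply: (finite_length_gen_by (gens := A) (full_subfunctor M)) => m x _.
exact: (indecomposable_gen_by phi_nat phi_gen phi_x0 x0_neq0 HI).
Qed.

Theorem mainTheorem6 (k : fieldType) :
  (forall n : nat, finite_length_sub (Pbar_tensor k n)) /\
  (forall M : FAmod k, projective M -> indecomposable M -> finite_length M).
Proof.
split; [exact: finite_length_Pbar_tensor | exact: finite_length_projective_indecomposable].
Qed.
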